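(* Let $\mathbb{F}$ be a field of characteristic not $2$, let $V=\mathrm{span}\{u,v\}$ with a symmetric bilinear form $B$ satisfying $B(u,u)=B(v,v)=1$, $B(u,v)=\delta$, and let $\mathfrak{S}(\delta)=\mathbb{F}\oplus V$ with product $(\alpha+x)(\beta+y)=(\alpha\beta+B(x,y))+(\alpha y+\beta x)$ and Frobenius form $(\alpha+x,\beta+y)=2\alpha\beta+2B(x,y)$. Suppose $\delta\neq\pm1$ and that $\mathbb{F}$ contains the roots $\zeta,\zeta^{-1}$ of $x^2-2\delta x+1$. Then: (a) $\mathfrak{S}(\delta)$ contains exactly two $1$-dimensional nilpotent subalgebras $\mathbb{F}s$ and $\mathbb{F}t$ (i.e. $s^2=0=t^2$), and both lie in $V$; (b) $s,1,t$ form a basis of $\mathfrak{S}(\delta)$; moreover, if $s$ and $t$ are scaled so that $(s,t)=\frac14$ (equivalently $B(s,t)=\frac18$), then the idempotents of $\mathfrak{S}(\delta)$ are exactly $0$, $1$, and the elements $\xi s+\frac12+\xi^{-1}t$ for $\xi\in\mathbb{F}\setminus\{0\}$.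
   Context: Here $1$ denotes the element $1+0$ of $\mathbb{F}\oplus V$, which is the identity of $\mathfrak{S}(\delta)$. *)

From HB Require Import structures.
From mathcomp Require Import all_boot all_order all_algebra.
Set Implicit Arguments. Unset Strict Implicit. Unset Printing Implicit Defensive.
Import Order.TTheory GRing.Theory Num.Theory.
Local Open Scope ring_scope.

(* The algebra S(delta) = F (+) V, V = span{u,v}, is modelled by 'rV[F]_3:
   the row x represents  (x 0) + (x 1) u + (x 2) v  with coordinates
   c0 (scalar part), cu (u-coordinate), cv (v-coordinate). *)
Section SDelta.
Variable F : fieldType.

Definition c0 (x : 'rV[F]_3) : F := x ord0 (@inord 2 0).
Definition cu (x : 'rV[F]_3) : F := x ord0 (@inord 2 1).
Definition cv (x : 'rV[F]_3) : F := x ord0 (@inord 2 2).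

Definition mkS (al a b : F) : 'rV[F]_3 :=
  \row_(i < 3) [:: al; a; b]`_i.

(* symmetric bilinear form on V: B(u,u)=B(v,v)=1, B(u,v)=delta *)
Definition Bform (delta : F) (a b c d : F) : F :=
  a * c + b * d + delta * (a * d + b * c).

Definition BV (delta : F) (x y : 'rV[F]_3) : F :=
  Bform delta (cu x) (cv x) (cu y) (cv y).

Definition Smul (delta : F) (x y : 'rV[F]_3) : 'rV[F]_3 :=
  mkS (c0 x * c0 y + BV delta x y)
      (c0 x * cu y + c0 y * cu x)
      (c0 x * cv y + c0 y * cv x).

Definition Sform (delta : F) (x y : 'rV[F]_3) : F :=
  2%:R * c0 x * c0 y + 2%:R * BV delta x y.

Definition Sone : 'rV[F]_3 := mkS 1 0 0.

Definition inV (x : 'rV[F]_3) : Prop := c0 x = 0.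

End SDelta.

From HB Require Import structures.
From mathcomp Require Import all_boot all_order all_algebra ring.
Set Implicit Arguments. Unset Strict Implicit. Unset Printing Implicit Defensive.
Import Order.TTheory GRing.Theory Num.Theory.
Local Open Scope ring_scope.

(* Let z be a root of X^2 - 2 delta X + 1, so that 2 delta = z + z^-1.  Then
   nil_s = v - z u and nil_t = v - z^-1 u are isotropic for B, and
   Bst = B(nil_s, nil_t) = -(z - z^-1)^2 / 2 is nonzero because z^2 <> 1, i.e.
   delta <> 1, -1.  In the basis 1, nil_s, nil_t the product becomes
     (al + p nil_s + q nil_t)^2 = (al^2 + 2 Bst p q) + 2 al (p nil_s + q nil_t),
   so x^2 = 0 forces al = 0 and p q = 0, while x^2 = x forces either p = q = 0
   and al in {0, 1}, or al = 1/2 and 2 Bst p q = 1/4, a hyperbola which is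
   parametrized by xi = p / c once (c nil_s, d nil_t) = 2 Bst c d = 1/4. *)

Section Coordinates.
Variable F : fieldType.
Implicit Types (x y : 'rV[F]_3) (a b c k : F).

Lemma c0_mkS a b c : c0 (mkS a b c) = a.
Proof. by rewrite /c0 mxE inordK. Qed.

Lemma cu_mkS a b c : cu (mkS a b c) = b.
Proof. by rewrite /cu mxE inordK. Qed.

Lemma cv_mkS a b c : cv (mkS a b c) = c.
Proof. by rewrite /cv mxE inordK. Qed.

Lemma mkS_eta x : x = mkS (c0 x) (cu x) (cv x).
Proof.
apply/rowP => -[[|[|[|//]]] lt_i3]; rewrite !mxE;
  by congr (x _ _); apply/val_inj; rewrite /= inordK.
Qed.

Lemma mkS_inj a b c (a' b' c' : F) :
  mkS a b c = mkS a' b' c' -> [/\ a = a', b = b' & c = c'].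
Proof.
move=> eq_abc; split.
- by rewrite -(c0_mkS a b c) eq_abc c0_mkS.
- by rewrite -(cu_mkS a b c) eq_abc cu_mkS.
- by rewrite -(cv_mkS a b c) eq_abc cv_mkS.
Qed.

Lemma mkS0 : mkS 0 0 0 = 0 :> 'rV[F]_3.
Proof. by apply/rowP => -[[|[|[|//]]] lt_i3]; rewrite !mxE. Qed.

Lemma mkSD a b c (a' b' c' : F) :
  mkS a b c + mkS a' b' c' = mkS (a + a') (b + b') (c + c').
Proof. by apply/rowP => -[[|[|[|//]]] lt_i3]; rewrite !mxE. Qed.

Lemma mkSZ k a b c : k *: mkS a b c = mkS (k * a) (k * b) (k * c).
Proof. by apply/rowP => -[[|[|[|//]]] lt_i3]; rewrite !mxE. Qed.

Lemma Smul_mkS delta a b c (a' b' c' : F) :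
  Smul delta (mkS a b c) (mkS a' b' c') =
  mkS (a * a' + Bform delta b c b' c') (a * b' + a' * b) (a * c' + a' * c).
Proof. by rewrite /Smul /BV !c0_mkS !cu_mkS !cv_mkS. Qed.

Lemma Sform_Smul delta x y : Sform delta x y = 2%:R * c0 (Smul delta x y).
Proof. by rewrite /Sform c0_mkS; ring. Qed.

End Coordinates.

Lemma root_sqr_neq1 (F : fieldType) (delta z : F) :
  2%:R != 0 :> F -> z ^+ 2 - 2%:R * delta * z + 1 = 0 ->
  delta != 1 -> delta != -1 -> z ^+ 2 != 1.
Proof.
move=> two_neq0 hz hd1 hdm1; apply/eqP => z2.
have /eqP : 2%:R * (1 - delta * z) = 0 by rewrite -hz z2; ring.
rewrite mulf_eq0 (negPf two_neq0) subr_eq0 /= => /eqP dz.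
have dE : delta = z by rewrite -[delta]mulr1 -z2 mulrA -dz; ring.
have /eqP : (z - 1) * (z + 1) = 0.
  by transitivity (z ^+ 2 - 1); [ring | rewrite z2 subrr].
by rewrite mulf_eq0 subr_eq0 addr_eq0 -dE (negPf hd1) (negPf hdm1).
Qed.

Lemma hyperbola_param (F : fieldType) (k r c d p q : F) :
  r != 0 -> k * (c * d) = r ->
  k * (p * q) = r <-> exists xi, xi != 0 /\ p = xi * c /\ q = xi^-1 * d.
Proof.
move=> r_neq0 kcd; have : k * (c * d) != 0 by rewrite kcd.
rewrite mulf_eq0 negb_or mulf_eq0 negb_or => /and3P[k_neq0 c_neq0 d_neq0].
split => [kpq | [xi [xi_neq0 [-> ->]]]]; last by rewrite -kcd; field.
have : k * (p * q) != 0 by rewrite kpq.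
rewrite mulf_eq0 negb_or mulf_eq0 negb_or => /and3P[_ p_neq0 _].
have pq_cd : p * q = c * d by apply: (mulfI k_neq0); rewrite kpq kcd.
exists (p / c); split; first by rewrite mulf_neq0 ?invr_eq0.
split; first by rewrite divfK.
by apply: (mulfI p_neq0); rewrite pq_cd invf_div; field.
Qed.

Section Isotropic.
Variables (F : fieldType) (delta z : F).
Hypothesis two_neq0 : 2%:R != 0 :> F.
Hypothesis root_z : z ^+ 2 - 2%:R * delta * z + 1 = 0.
Hypothesis z2_neq1 : z ^+ 2 != 1.

Lemma root_neq0 : z != 0.
Proof.
apply/eqP => z0; move: root_z; rewrite z0 expr0n mulr0 subr0 add0r => /eqP.
by rewrite oner_eq0.
Qed.

Lemma deltaE : delta = (z + z^-1) / 2%:R.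
Proof.
apply: (mulIf (mulf_neq0 two_neq0 root_neq0)).
transitivity (z ^+ 2 + 1 - (z ^+ 2 - 2%:R * delta * z + 1)); first by ring.
by rewrite root_z subr0; field; rewrite two_neq0 root_neq0.
Qed.

Lemma root_mul_sub1_neq0 : z * z - 1 != 0.
Proof. by rewrite -expr2 subr_eq0. Qed.

Lemma root_subV_neq0 : z - z^-1 != 0.
Proof.
apply: contra z2_neq1 => /eqP zV; apply/eqP.
by rewrite expr2 {2}(subr0_eq zV) divff // root_neq0.
Qed.

Definition nil_s : 'rV[F]_3 := mkS 0 (- z) 1.
Definition nil_t : 'rV[F]_3 := mkS 0 (- z^-1) 1.

Definition sdecomp (al p q : F) : 'rV[F]_3 :=
  al *: Sone F + p *: nil_s + q *: nil_t.

Definition Bst : F := BV delta nil_s nil_t.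

Lemma sdecompE al p q : sdecomp al p q = mkS al (- (z * p) - z^-1 * q) (p + q).
Proof. by rewrite /sdecomp /Sone !mkSZ !mkSD; congr mkS; ring. Qed.

Lemma c0_sdecomp al p q : c0 (sdecomp al p q) = al.
Proof. by rewrite sdecompE c0_mkS. Qed.

Lemma sdecomp_inj al p q al' p' q' :
  sdecomp al p q = sdecomp al' p' q' -> [/\ al = al', p = p' & q = q'].
Proof.
rewrite !sdecompE => /mkS_inj[-> eq_u eq_v].
have eq_q : (z - z^-1) * q = (z - z^-1) * q'.
  by transitivity (- (z * p) - z^-1 * q + z * (p + q)); [ring | rewrite eq_u eq_v; ring].
have /(mulfI root_subV_neq0) qq := eq_q.
by split=> //; apply: (addIr q); rewrite eq_v qq.
Qed.

Lemma sdecomp_surj x : exists al p q, x = sdecomp al p q.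
Proof.
pose p := (- cu x - z^-1 * cv x) / (z - z^-1).
exists (c0 x), p, (cv x - p); rewrite sdecompE {1}(mkS_eta x) /p.
by congr mkS; field; rewrite root_neq0 root_mul_sub1_neq0.
Qed.

Lemma sdecomp0 : sdecomp 0 0 0 = 0.
Proof. by rewrite /sdecomp !scale0r !addr0. Qed.

Lemma sdecomp1 : sdecomp 1 0 0 = Sone F.
Proof. by rewrite /sdecomp !scale0r scale1r !addr0. Qed.

Lemma sdecomp_s p : sdecomp 0 p 0 = p *: nil_s.
Proof. by rewrite /sdecomp !scale0r add0r addr0. Qed.

Lemma sdecomp_t q : sdecomp 0 0 q = q *: nil_t.
Proof. by rewrite /sdecomp !scale0r !add0r. Qed.

Lemma BstE : Bst = - (z - z^-1) ^+ 2 / 2%:R.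
Proof.
rewrite /Bst /BV /nil_s /nil_t !cu_mkS !cv_mkS /Bform deltaE.
by field; rewrite root_neq0 andbT.
Qed.

Lemma Bst_neq0 : Bst != 0.
Proof.
by rewrite BstE mulf_neq0 ?invr_eq0 // oppr_eq0 expf_neq0 // root_subV_neq0.
Qed.

Lemma Smul_sdecomp al p q al' p' q' :
  Smul delta (sdecomp al p q) (sdecomp al' p' q') =
  sdecomp (al * al' + Bst * (p * q' + q * p')) (al * p' + al' * p) (al * q' + al' * q).
Proof.
rewrite !sdecompE Smul_mkS BstE /Bform deltaE.
by congr mkS; field; rewrite ?root_neq0 ?andbT.
Qed.

Lemma Sform_sdecomp_st p q :
  Sform delta (p *: nil_s) (q *: nil_t) = 2%:R * Bst * (p * q).
Proof.
by rewrite -sdecomp_s -sdecomp_t Sform_Smul Smul_sdecomp c0_sdecomp; ring.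
Qed.

Lemma sdecomp_scale a al b c d :
  a *: (c *: nil_s) + al *: Sone F + b *: (d *: nil_t) = sdecomp al (a * c) (b * d).
Proof. by rewrite /sdecomp !scalerA (addrC (al *: _)). Qed.

Lemma sqr_eq0_on_nil_lines x :
  Smul delta x x = 0 -> (exists c, x = c *: nil_s) \/ (exists c, x = c *: nil_t).
Proof.
have [al [p [q ->]]] := sdecomp_surj x.
rewrite Smul_sdecomp -sdecomp0 => /sdecomp_inj[h0 hp _].
have al0 : al = 0.
  apply/eqP; suff /eqP : al ^+ 3 = 0 by rewrite expf_eq0.
  transitivity (al * (al * al + Bst * (p * q + q * p)) - Bst * q * (al * p + al * p)).
    by ring.
  by rewrite h0 hp; ring.
move: h0; rewrite al0 mul0r add0r => /eqP.
rewrite (_ : p * q + q * p = 2%:R * (p * q)); last by ring.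
rewrite !mulf_eq0 (negPf Bst_neq0) (negPf two_neq0) /= => /orP[] /eqP->.
- by right; exists q; rewrite sdecomp_t.
- by left; exists p; rewrite sdecomp_s.
Qed.

Lemma halfD (y : F) : 2%:R^-1 * y + 2%:R^-1 * y = y.
Proof. by rewrite -mulrDl -mulr2n -(mulr_natl (2%:R^-1)) mulfV // mul1r. Qed.

Lemma quarterE : 4%:R^-1 = 2%:R^-1 * 2%:R^-1 :> F.
Proof. by rewrite -invfM -natrM. Qed.

Lemma sqr_sdecomp_idem al p q :
  Smul delta (sdecomp al p q) (sdecomp al p q) = sdecomp al p q <->
  [\/ [/\ al = 0, p = 0 & q = 0], [/\ al = 1, p = 0 & q = 0]
    | al = 2%:R^-1 /\ 2%:R * Bst * (p * q) = 4%:R^-1].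
Proof.
rewrite Smul_sdecomp; split => [/sdecomp_inj[h0 hp hq] | ].
  have [al_half | al_nhalf] := eqVneq (2%:R * al - 1) 0.
    have al_eq : al = 2%:R^-1.
      by apply: (mulfI two_neq0); rewrite divff //; apply/eqP; rewrite -subr_eq0 al_half.
    subst al; constructor 3; split => //.
    have -> : 2%:R * Bst * (p * q) = 2%:R^-1 - 2%:R^-1 * 2%:R^-1 by rewrite -{1}h0; ring.
    by rewrite quarterE -{1}(halfD 2%:R^-1) addrK.
  have p0 : p = 0.
    have /eqP : (2%:R * al - 1) * p = 0.
      by transitivity (al * p + al * p - p); [ring | rewrite hp subrr].
    by rewrite mulf_eq0 (negPf al_nhalf) /= => /eqP.
  have q0 : q = 0.
    have /eqP : (2%:R * al - 1) * q = 0.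
      by transitivity (al * q + al * q - q); [ring | rewrite hq subrr].
    by rewrite mulf_eq0 (negPf al_nhalf) /= => /eqP.
  subst p q; have /eqP : al * (al - 1) = 0.
    by transitivity (al * al + Bst * (0 * 0 + 0 * 0) - al); [ring | rewrite h0 subrr].
  rewrite mulf_eq0 subr_eq0 => /orP[] /eqP->.
    by constructor 1.
  by constructor 2.
case=> [[-> -> ->] | [-> -> ->] | [-> hpq]]; try by congr sdecomp; ring.
rewrite (_ : Bst * (p * q + q * p) = 2%:R * Bst * (p * q)); last by ring.
by rewrite hpq quarterE !halfD.
Qed.

Lemma nil_s_neq0 : nil_s != 0.
Proof. by rewrite -mkS0; apply/eqP => /mkS_inj[_ _ /eqP]; rewrite oner_eq0. Qed.

Lemma nil_t_neq0 : nil_t != 0.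
Proof. by rewrite -mkS0; apply/eqP => /mkS_inj[_ _ /eqP]; rewrite oner_eq0. Qed.

Lemma sqr_nil_s : Smul delta nil_s nil_s = 0.
Proof.
by rewrite -[nil_s]scale1r -sdecomp_s Smul_sdecomp -sdecomp0; congr sdecomp; ring.
Qed.

Lemma sqr_nil_t : Smul delta nil_t nil_t = 0.
Proof.
by rewrite -[nil_t]scale1r -sdecomp_t Smul_sdecomp -sdecomp0; congr sdecomp; ring.
Qed.

Lemma nil_t_notin_line_s : ~ exists c, nil_t = c *: nil_s.
Proof.
case=> c; rewrite -[nil_t]scale1r -sdecomp_t -sdecomp_s.
by case/sdecomp_inj => _ _ /eqP; rewrite oner_eq0.
Qed.

Lemma basis_nil_one c d :
  c != 0 -> d != 0 -> basis_of fullv [:: c *: nil_s; Sone F; d *: nil_t].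
Proof.
move=> c_neq0 d_neq0; rewrite basisEdim dimvf leqnn andbT.
apply/subvP => x _; have [al [p [q ->]]] := sdecomp_surj x.
rewrite -(divfK c_neq0 p) -(divfK d_neq0 q) -sdecomp_scale.
by rewrite !memvD // memvZ // memv_span // !inE eqxx ?orbT.
Qed.

Lemma idempotent_param c d :
  Sform delta (c *: nil_s) (d *: nil_t) = 4%:R^-1 ->
  forall x, Smul delta x x = x <->
  [\/ x = 0, x = Sone F |
      exists xi, xi != 0 /\
        x = xi *: (c *: nil_s) + 2%:R^-1 *: Sone F + xi^-1 *: (d *: nil_t)].
Proof.
rewrite Sform_sdecomp_st => hcd x; have [al [p [q ->]]] := sdecomp_surj x.
have quarter_neq0 : 4%:R^-1 != 0 :> F by rewrite quarterE mulf_neq0 ?invr_eq0.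
have hyp := hyperbola_param _ _ quarter_neq0 hcd.
rewrite sqr_sdecomp_idem -sdecomp0; split.
- case=> [[-> -> ->] | [-> -> ->] | [-> /hyp[xi [xi_neq0 [-> ->]]]]].
  + by constructor 1.
  + by constructor 2; rewrite sdecomp1.
  + by constructor 3; exists xi; rewrite sdecomp_scale.
- case=> [/sdecomp_inj[-> -> ->] | | [xi [xi_neq0]]].
  + by constructor 1.
  + by rewrite -sdecomp1 => /sdecomp_inj[-> -> ->]; constructor 2.
  + rewrite sdecomp_scale => /sdecomp_inj[-> -> ->].
    by constructor 3; split => //; apply/hyp; exists xi.
Qed.

End Isotropic.

Theorem lemma3p5 (F : fieldType) (delta : F)
  (hchar : (2%:R : F) != 0)
  (hd1 : delta != 1) (hdm1 : delta != -1)
  (hroots : exists zeta : F, zeta ^+ 2 - 2%:R * delta * zeta + 1 = 0) :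
  exists s0 t0 : 'rV[F]_3,
  [/\ (* (a): exactly two 1-dim nilpotent subalgebras F s0, F t0, inside V *)
      s0 != 0 /\ t0 != 0,
      Smul delta s0 s0 = 0 /\ Smul delta t0 t0 = 0,
      inV s0 /\ inV t0,
      ~ (exists c : F, t0 = c *: s0) /\
      (forall x : 'rV[F]_3, x != 0 -> Smul delta x x = 0 ->
         (exists c : F, x = c *: s0) \/ (exists c : F, x = c *: t0)) &
      (* (b): for any generators s of F s0 and t of F t0 *)
      forall s t : 'rV[F]_3, s != 0 -> t != 0 ->
        (exists c : F, s = c *: s0) -> (exists c : F, t = c *: t0) ->
        basis_of fullv [:: s; Sone F; t] /\
        (Sform delta s t = 4%:R^-1 ->
         forall x : 'rV[F]_3, Smul delta x x = x <->
           [\/ x = 0, x = Sone F |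
               exists xi : F, xi != 0 /\
                 x = xi *: s + 2%:R^-1 *: Sone F + xi^-1 *: t])].
Proof.
have [z root_z] := hroots.
have z2_neq1 := root_sqr_neq1 hchar root_z hd1 hdm1.
exists (nil_s z), (nil_t z); split.
- by split; [exact: nil_s_neq0 | exact: nil_t_neq0].
- by rewrite (sqr_nil_s hchar root_z) (sqr_nil_t hchar root_z).
- by rewrite /inV !c0_mkS.
- split; first exact: (nil_t_notin_line_s root_z z2_neq1).
  by move=> x _; apply: (sqr_eq0_on_nil_lines hchar root_z z2_neq1).
- move=> s t s_neq0 t_neq0 [c sE] [d tE]; subst s t.
  have c_neq0 : c != 0 by apply: contraNneq s_neq0 => ->; rewrite scale0r.
  have d_neq0 : d != 0 by apply: contraNneq t_neq0 => ->; rewrite scale0r.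
  split; first exact: (basis_nil_one root_z z2_neq1).
  exact: (idempotent_param hchar root_z z2_neq1).
Qed.
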